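(* Run the mechanism BFM-VM described in the context with arbitrary $B>0$, $\alpha>1$, $\ell\in\{1,2\}$, with all sellers behaving truthfully. Then $v(S^* )+\rho_1\ge\rho_{M-1}$, and consequently $$\frac{\alpha^2}{\alpha-1}\,v(S^* )\ \ge\ \rho_M.$$
   Context: Setting. $\mathcal{N}$ is a finite set of $n$ sellers. The valuation $v:2^{\mathcal{N}}\to\mathbb{R}_{\ge 0}$ satisfies $v(\emptyset)=0$ and is submodular (for $X\subseteq Y\subseteq\mathcal{N}$ and $u\notin Y$, $v(u\mid Y)\le v(u\mid X)$), not necessarily monotone, where $v(S\mid T)=v(S\cup T)-v(T)$, $v(u\mid T)=v(\{u\}\mid T)$, $v(u)=v(\{u\})$. Each seller $u$ has a private cost $c(u)\ge 0$. $B>0$ is the budget, $[\ell]=\{1,\dots,\ell\}$. Sellers behave truthfully: a seller $u$ offered price $q$ accepts iff $c(u)\le q$. Mechanism BFM-VM (inputs $B$, $\alpha>1$, $\ell\in\{1,2\}$): 1. Offer every seller the price $B$; let $R$ be the set of sellers who accept, and set $p(u)=B$ for $u\in R$. 2. Set $t=1$, $\rho_1=\max_{u\in R}v(u)$, $S_{1,1}=\{u_0\}$ for some $u_0\in\arg\max_{u\in R}v(u)$, and (if $\ell=2$) $S_{2,1}=\emptyset$. 3. Repeat rounds: set $t\leftarrow t+1$, $\rho_t=\alpha\rho_{t-1}$, $S_{i,t}=\emptyset$ for $i\in[\ell]$. Process the sellers $u\in R\setminus\bigcup_{i=1}^{\ell}S_{i,t-1}$ one at a time in a fixed order. For each such $u$: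 pick $j\in\arg\max_{i\in[\ell]}v(u\mid S_{i,t})$ (current contents); update $p(u)\leftarrow\min\{p(u),\ v(u\mid S_{j,t})/(\rho_t/B)\}$ and offer $p(u)$ to $u$. If $u$ accepts: if $v(S_{j,t}\cup\{u\})>\rho_t$, end the round immediately; otherwise add $u$ to $S_{j,t}$. If $u$ rejects, remove $u$ from $R$. After the round, stop if $R\setminus\bigcup_{i=1}^{\ell}(S_{i,t-1}\cup S_{i,t})=\emptyset$; otherwise start another round. 4. Let $M$ be the final value of $t$. Output $S^*\in\arg\max_{A\in\{S_{i,t}: i\in[\ell],\ t\in\{M-1,M\}\}}v(A)$, paying each $u\in S^*$ its current price $p(u)$. Notation: $\rho_t$ is the threshold of round $t$ ($\rho_t=\alpha^{t-1}\rho_1$). *)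

(* Formalization of mechanism BFM-VM as a relational
   (nondeterministic in tie-breaking) execution trace. *)
From HB Require Import structures.
From mathcomp Require Import all_boot all_order all_algebra.
Set Implicit Arguments. Unset Strict Implicit. Unset Printing Implicit Defensive.
Import Order.TTheory GRing.Theory Num.Theory.
Local Open Scope ring_scope.

Section BFMVM.
Variables (K : realFieldType) (T : finType).
Variables (v : {set T} -> K) (c : T -> K) (B alpha : K) (l : nat).
(* the fixed processing order of the sellers *)
Variable ord : seq T.

Definition marg (u : T) (S : {set T}) : K := v (u |: S) - v S.

Definition submodular : Prop :=
  forall (X Y : {set T}) (u : T), X \subset Y -> u \notin Y -> marg u Y <= marg u X.

Definition rho (rho1 : K) (t : nat) : K := alpha ^+ t.-1 * rho1.

Definition upd_price (p : T -> K) (u : T) (q : K) : T -> K :=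
  fun x => if x == u then q else p x.

Definition add_to (S : 'I_l -> {set T}) (j : 'I_l) (u : T) : 'I_l -> {set T} :=
  fun i => if i == j then u |: S i else S i.

Definition best_bin (S : 'I_l -> {set T}) (u : T) (j : 'I_l) : Prop :=
  forall i : 'I_l, marg u (S i) <= marg u (S j).

Definition offer (p : T -> K) (S : 'I_l -> {set T}) (u : T) (j : 'I_l) (rt : K) : K :=
  Num.min (p u) (marg u (S j) / (rt / B)).

(* run_round rt us Rs p S Rs' p' S' : processing the list us of sellers in a
   round with threshold rt, starting from remaining set Rs, prices p and sets S,
   ends with Rs', p', S'. *)
Inductive run_round (rt : K) : seq T -> {set T} -> (T -> K) -> ('I_l -> {set T}) ->
    {set T} -> (T -> K) -> ('I_l -> {set T}) -> Prop :=
| RoundNil Rs p S : run_round rt [::] Rs p S Rs p S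
| RoundReject u us Rs p S j Rs' p' S' :
    best_bin S u j ->
    ~~ (c u <= offer p S u j rt) ->
    run_round rt us (Rs :\ u) (upd_price p u (offer p S u j rt)) S Rs' p' S' ->
    run_round rt (u :: us) Rs p S Rs' p' S'
| RoundEnd u us Rs p S j :
    best_bin S u j ->
    c u <= offer p S u j rt ->
    rt < v (u |: S j) ->
    run_round rt (u :: us) Rs p S Rs (upd_price p u (offer p S u j rt)) S
| RoundAdd u us Rs p S j Rs' p' S' :
    best_bin S u j ->
    c u <= offer p S u j rt ->
    v (u |: S j) <= rt ->
    run_round rt us Rs (upd_price p u (offer p S u j rt)) (add_to S j u) Rs' p' S' ->
    run_round rt (u :: us) Rs p S Rs' p' S'.

Definition bigU (S : 'I_l -> {set T}) : {set T} := \bigcup_(i : 'I_l) S i.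

Definition to_process (Rs : {set T}) (S : 'I_l -> {set T}) : seq T :=
  [seq u <- ord | (u \in Rs) && (u \notin bigU S)].

Definition emptyS : 'I_l -> {set T} := fun _ => set0.

(* mech_rounds rho1 t Rs p S M SM1 SM pM : after completing round t with
   remaining set Rs, prices p and sets S = (S_{i,t})_i, the mechanism runs
   further rounds and stops with final round index M, sets
   SM1 = (S_{i,M-1})_i, SM = (S_{i,M})_i and final prices pM. *)
Inductive mech_rounds (rho1 : K) : nat -> {set T} -> (T -> K) -> ('I_l -> {set T}) ->
    nat -> ('I_l -> {set T}) -> ('I_l -> {set T}) -> (T -> K) -> Prop :=
| MechStop t Rs p S Rs' p' S' :
    run_round (rho rho1 t.+1) (to_process Rs S) Rs p emptyS Rs' p' S' ->
    Rs' :\: (bigU S :|: bigU S') = set0 ->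
    mech_rounds rho1 t Rs p S t.+1 S S' p'
| MechCont t Rs p S Rs' p' S' M SM1 SM pM :
    run_round (rho rho1 t.+1) (to_process Rs S) Rs p emptyS Rs' p' S' ->
    Rs' :\: (bigU S :|: bigU S') != set0 ->
    mech_rounds rho1 t.+1 Rs' p' S' M SM1 SM pM ->
    mech_rounds rho1 t Rs p S M SM1 SM pM.

Definition R0 : {set T} := [set u | c u <= B].

Definition S1 (u0 : T) : 'I_l -> {set T} :=
  fun i => if val i == 0%N then [set u0] else set0.

Definition is_output (SM1 SM : 'I_l -> {set T}) (Sstar : {set T}) : Prop :=
  (exists i : 'I_l, Sstar = SM1 i \/ Sstar = SM i) /\
  (forall i : 'I_l, v (SM1 i) <= v Sstar /\ v (SM i) <= v Sstar).

End BFMVM.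

From Pilot Require Import Defs.
From HB Require Import structures.
From mathcomp Require Import all_boot all_order all_algebra.
Import Order.TTheory GRing.Theory Num.Theory.
Local Open Scope ring_scope.
Set Implicit Arguments. Unset Strict Implicit.

(* A round other than the last one is ended by a seller u overshooting the
   threshold, v(S_j + u) > rho_t; otherwise every remaining seller would have
   been settled and the mechanism would stop.  By submodularity
   v(S_j + u) <= v(S_j) + v(u) <= v(S_j) + rho_1, so rho_t <= v(S_{j,t}) + rho_1
   after every round t that is followed by another one, in particular for
   t = M - 1.  Since rho_1 <= rho_t / alpha for t >= 2, this also gives
   (alpha - 1) rho_t <= alpha v(S_{j,t}), which for t = 1 holds trivially
   because S_{1,1} = {u_0}; multiplying by alpha yields the second bound. *)

Lemma overshoot_bound (K : realFieldType) (a r1 r w : K) :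
  0 < a -> a * r1 <= r -> r <= w + r1 -> (a - 1) * r <= a * w.
Proof.
move=> a_gt0 r1_le r_le; rewrite mulrBl mul1r lerBlDr.
by apply: le_trans (ler_wpM2l (ltW a_gt0) r_le) _; rewrite mulrDr lerD2l.
Qed.

Section Mechanism.
Variables (K : realFieldType) (T : finType).
Variables (v : {set T} -> K) (c : T -> K) (B alpha : K) (l : nat) (ord : seq T).

Lemma rho1_le_rho rho1 t : 0 <= rho1 -> 1 <= alpha -> rho1 <= rho alpha rho1 t.
Proof. by move=> rho1_ge0 alpha_ge1; rewrite /rho ler_peMl // exprn_ege1. Qed.

Lemma rhoS rho1 t : (0 < t)%N -> rho alpha rho1 t.+1 = alpha * rho alpha rho1 t.
Proof. by case: t => // t _; rewrite /rho /= exprS mulrA. Qed.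

Hypotheses (v_sub : submodular v) (v0 : v set0 = 0) (v_ge0 : forall S, 0 <= v S).

Lemma value_setU1_le (S : {set T}) u : v (u |: S) <= v S + v [set u].
Proof.
have [uS | uNS] := boolP (u \in S).
  by rewrite (setUidPr _) ?sub1set // lerDl.
have := v_sub (sub0set S) uNS.
by rewrite /marg setU0 v0 subr0 lerBlDr addrC.
Qed.

Lemma run_round_remaining_sub rt us Rs p (S S' : 'I_l -> {set T}) Rs' p' :
  run_round v c B rt us Rs p S Rs' p' S' -> Rs' \subset Rs.
Proof.
elim=> // u {}us {}Rs {}p {}S j {}Rs' {}p' {}S' _ _ _ /subset_trans; apply.
exact: subsetDl.
Qed.

Lemma run_round_sets_grow rt us Rs p (S S' : 'I_l -> {set T}) Rs' p' :
  run_round v c B rt us Rs p S Rs' p' S' -> forall i, S i \subset S' i.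
Proof.
elim=> // u {}us {}Rs {}p {}S j {}Rs' {}p' {}S' _ _ _ _ grow i.
apply: subset_trans (grow i); rewrite /add_to; case: eqP => // _.
exact: subsetUr.
Qed.

Lemma run_round_overshoot_or_settled rt us Rs p (S S' : 'I_l -> {set T}) Rs' p' :
  run_round v c B rt us Rs p S Rs' p' S' ->
  (exists2 u, u \in us & exists j, rt < v (u |: S' j)) \/
  {in us, forall x, (x \notin Rs') || (x \in Defs.bigU S')}.
Proof.
elim=> {us Rs p S Rs' p' S'} [Rs p S | u us Rs p S j Rs' p' S' _ _ run IH
  | u us Rs p S j _ _ over | u us Rs p S j Rs' p' S' _ _ _ run IH].
- by right=> x; rewrite in_nil.
- case: IH => [[w w_us over] | settled]; first by left; exists w; rewrite ?inE ?w_us ?orbT.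
  right=> x; rewrite inE => /predU1P [-> | /settled //].
  apply/orP; left; apply/negP => /(subsetP (run_round_remaining_sub run)).
  by rewrite !inE eqxx.
- by left; exists u; [exact: mem_head | exists j].
- case: IH => [[w w_us over] | settled]; first by left; exists w; rewrite ?inE ?w_us ?orbT.
  right=> x; rewrite inE => /predU1P [-> | /settled //].
  apply/orP; right; apply: (subsetP (bigcup_sup j isT)).
  by apply: (subsetP (run_round_sets_grow run j)); rewrite /add_to eqxx setU11.
Qed.

Hypothesis ord_all : forall u : T, u \in ord.

Lemma run_round_continue_overshoot rt Rs p (S S' : 'I_l -> {set T}) Rs' p' :
  run_round v c B rt (to_process ord Rs S) Rs p (@emptyS T l) Rs' p' S' ->
  Rs' :\: (Defs.bigU S :|: Defs.bigU S') != set0 ->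
  exists2 u, u \in Rs & exists j, rt < v (u |: S' j).
Proof.
move=> run; have [[u] | settled] := run_round_overshoot_or_settled run.
  by rewrite mem_filter => /andP [/andP [uRs _] _]; exists u.
rewrite setD_eq0 => /negP[]; apply/subsetP => x xRs'.
rewrite inE; apply/orP; have [xS | xNS] := boolP (x \in Defs.bigU S); [by left | right].
have xRs := subsetP (run_round_remaining_sub run) x xRs'.
have := settled x; rewrite mem_filter xRs xNS ord_all xRs' => /(_ isT) //.
Qed.

Lemma mech_rounds_lt rho1 t Rs p (S SM1 SM : 'I_l -> {set T}) M pM :
  mech_rounds v c B alpha ord rho1 t Rs p S M SM1 SM pM -> (t < M)%N.
Proof.
by elim=> {t Rs p S M SM1 SM pM} [t * | t Rs p S Rs' p' S' M SM1 SM pM _ _ _ /ltnW].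
Qed.

Definition near_threshold rho1 t (S : 'I_l -> {set T}) : Prop :=
  exists i, rho alpha rho1 t <= v (S i) + rho1 /\
            (alpha - 1) * rho alpha rho1 t <= alpha * v (S i).

Hypothesis alpha_ge1 : 1 <= alpha.

Lemma mech_rounds_near_threshold rho1 t Rs p (S SM1 SM : 'I_l -> {set T}) M pM :
  0 <= rho1 -> mech_rounds v c B alpha ord rho1 t Rs p S M SM1 SM pM ->
  (0 < t)%N -> {in Rs, forall u, v [set u] <= rho1} ->
  near_threshold rho1 t S -> near_threshold rho1 M.-1 SM1.
Proof.
move=> rho1_ge0; elim=> {t Rs p S M SM1 SM pM} [// | t Rs p S Rs' p' S' M SM1 SM pM
  run cont _ IH t_gt0 Rs_small _].
apply: IH => //.
  by move=> u /(subsetP (run_round_remaining_sub run)) /Rs_small.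
have [u uRs [j over]] := run_round_continue_overshoot run cont.
have near : rho alpha rho1 t.+1 <= v (S' j) + rho1.
  apply: le_trans (ltW over) _; apply: le_trans (value_setU1_le _ _) _.
  by rewrite lerD2l Rs_small.
exists j; split=> //; apply: overshoot_bound near => //.
  exact: lt_le_trans alpha_ge1.
by rewrite rhoS // ler_wpM2l ?rho1_le_rho // (le_trans ler01 alpha_ge1).
Qed.

End Mechanism.

Theorem lemma5p2 (K : realFieldType) (T : finType)
  (v : {set T} -> K) (c : T -> K) (B alpha : K) (l : nat) (ord : seq T)
  (ord_uniq : uniq ord) (ord_all : forall u : T, u \in ord)
  (v0 : v set0 = 0) (v_ge0 : forall S : {set T}, 0 <= v S)
  (v_sub : submodular v) (c_ge0 : forall u : T, 0 <= c u)
  (B_gt0 : 0 < B) (alpha_gt1 : 1 < alpha) (hl : (l == 1%N) || (l == 2%N))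
  (u0 : T) (hu0 : u0 \in R0 c B)
  (hmax : forall u : T, u \in R0 c B -> v [set u] <= v [set u0])
  (M : nat) (SM1 SM : 'I_l -> {set T}) (pM : T -> K) (Sstar : {set T})
  (hrun : mech_rounds v c B alpha ord (v [set u0]) 1 (R0 c B) (fun _ => B)
            (@S1 T l u0) M SM1 SM pM)
  (hout : is_output v SM1 SM Sstar) :
  rho alpha (v [set u0]) M.-1 <= v Sstar + v [set u0] /\
  rho alpha (v [set u0]) M <= alpha ^+ 2 / (alpha - 1) * v Sstar.
Proof.
have l_gt0 : (0 < l)%N by case/orP: hl => /eqP ->.
have rho1_ge0 := v_ge0 [set u0].
have alpha_ge0 : 0 <= alpha by rewrite ltW // (lt_trans ltr01).
have init : near_threshold v alpha (v [set u0]) 1 (@S1 T l u0).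
  exists (Ordinal l_gt0); rewrite /S1 /rho /= expr0 mul1r lerDl rho1_ge0.
  by split=> //; rewrite ler_wpM2r // gerBl.
have [i [near_sum near_prod]] := mech_rounds_near_threshold v_sub v0 v_ge0 ord_all
  (ltW alpha_gt1) rho1_ge0 hrun isT hmax init.
have [_ /(_ i) [SM1_le _]] := hout.
split; first by apply: le_trans near_sum _; rewrite lerD2r.
have M_gt1 : (1 < M)%N := mech_rounds_lt hrun.
have M1_gt0 : (0 < M.-1)%N by rewrite -ltnS prednK // ltnW.
rewrite -[M in rho _ _ M](prednK (ltnW M_gt1)) rhoS //.
rewrite mulrAC ler_pdivlMr ?subr_gt0 // -mulrA [_ * (_ - 1)]mulrC expr2 -mulrA.
rewrite ler_wpM2l //.
by apply: le_trans near_prod _; rewrite ler_wpM2l.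
Qed.
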